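(* Let $m$ be a positive integer and $n$ an integer with $\frac{3^{m-1}+1}{2}\le n\le\frac{3^m-1}{2}$ (so feasible partitions of $n$ have $m$ parts). (a) If $\frac{3^{m-1}+1}{2}\le n\le \frac{3^{m-1}+1}{2}+3^{m-2}$, then the smallest and largest values of $R_{m-1}$ over all feasible partitions of $n$ are $\left\lceil\frac{n-1}{3}\right\rceil$ and $\left\lfloor\frac{2n+3^{m-2}-1}{4}\right\rfloor$, respectively; that is, the range of $R_{m-1}$ is $\left\lceil\frac{n-1}{3}\right\rceil\le R_{m-1}\le\left\lfloor\frac{2n+3^{m-2}-1}{4}\right\rfloor$. (b) If $\frac{3^{m-1}+1}{2}+3^{m-2}+1\le n\le\frac{3^m-1}{2}$, then the range of $R_{m-1}$ over all feasible partitions of $n$ is $\left\lceil\frac{n-1}{3}\right\rceil\le R_{m-1}\le\frac{3^{m-1}-1}{2}$, with both bounds attained.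
   Context: A weighing partition of a positive integer $n$ is a multiset of positive integers summing to $n$ such that every integer $\ell$ with $1\le\ell\le n$ is a sum $\sum_j u_jw_j$ with $u_j\in\{-1,0,1\}$. A feasible partition of $n$ is a weighing partition of $n$ whose number of parts $m$ is minimal among all weighing partitions of $n$, written $w_1\le\dots\le w_m$. For such a partition, $R_i=w_1+\dots+w_i$ with $R_0=0$; in particular $R_{m-1}=n-w_m$. *)

From mathcomp Require Import all_boot all_order all_algebra.
Set Implicit Arguments. Unset Strict Implicit. Unset Printing Implicit Defensive.
Import Order.TTheory GRing.Theory Num.Theory.

(* A partition of n is represented by the finite list of its parts
   (order irrelevant; a multiset). *)

Definition representable (w : seq nat) (l : nat) : Prop :=
  exists u : nat -> int,
    (forall j, u j = 0%R \/ u j = 1%R \/ u j = (-1)%R) /\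
    (\sum_(j < size w) u j * Posz (nth 0%N w j))%R = Posz l.

Definition weighing_partition (n : nat) (w : seq nat) : Prop :=
  all (fun x => 0 < x) w /\ sumn w = n /\
  forall l, 1 <= l <= n -> representable w l.

Definition feasible_partition (n : nat) (w : seq nat) : Prop :=
  weighing_partition n w /\
  forall w', weighing_partition n w' -> size w <= size w'.

(* R_{m-1} = n - w_m, where w_m is the largest part *)
Definition R_last (n : nat) (w : seq nat) : nat := n - \max_(x <- w) x.

From mathcomp Require Import all_boot all_order all_algebra zify.
Import Order.TTheory GRing.Theory Num.Theory.
Set Implicit Arguments. Unset Strict Implicit. Unset Printing Implicit Defensive.

(* Sort a weighing partition decreasingly as x :: t, so that R_{m-1} = sumn t.
   The partition weighs every integer up to its sum exactly when each part is
   at most twice the sum of the smaller parts plus one.  Hence x <= 2 R + 1,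
   i.e. n <= 3 R + 1; and as t already reaches all of [-R, R], counting its
   3^(m-1) signed sums gives 2 R + 1 <= 3^(m-1).  Doing the same for t minus
   its largest part y <= x = n - R gives 4 R + 1 <= 2 n + 3^(m-2).  All these
   bounds are attained by n - R, R - T and the ternary weights 3^(m-3), ..., 1,
   whose total is T = (3^(m-2) - 1) / 2. *)

Fixpoint signed_sums (s : seq nat) : seq int :=
  if s is x :: t then
    signed_sums t ++ [seq (z + x%:Z)%R | z <- signed_sums t]
                  ++ [seq (z - x%:Z)%R | z <- signed_sums t]
  else [:: 0%R].

Lemma signed_sums_cons x s z :
  (z \in signed_sums (x :: s)) =
  [|| z \in signed_sums s, (z - x%:Z)%R \in signed_sums s
    | (z + x%:Z)%R \in signed_sums s].
Proof.
rewrite /= !mem_cat -{2}(subrK (Posz x) z) -{3}(addrK (Posz x) z).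
by rewrite !(mem_map (addIr _)).
Qed.

Lemma size_signed_sums s : size (signed_sums s) = 3 ^ size s.
Proof. by elim: s => //= x s IH; rewrite !size_cat !size_map IH expnS; lia. Qed.

Lemma signed_sums0 s : 0%R \in signed_sums s.
Proof. by elim: s => [|x s IH]; rewrite ?signed_sums_cons ?IH. Qed.

Lemma signed_sumsN s z : z \in signed_sums s -> (- z)%R \in signed_sums s.
Proof.
elim: s z => [|x s IH] z; first by rewrite !inE => /eqP ->; rewrite oppr0.
rewrite !signed_sums_cons => /or3P [] /IH; rewrite ?opprD ?opprK => ->;
  by rewrite ?orbT.
Qed.

Lemma signed_sums_norm s z : z \in signed_sums s -> (`|z| <= (sumn s)%:Z)%R.
Proof.
elim: s z => [|x s IH] z; first by rewrite inE => /eqP ->.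
by rewrite signed_sums_cons /= => /or3P [] /IH; lia.
Qed.

Lemma signed_sumsP s z :
  (exists u : nat -> int, (forall j, u j = 0%R \/ u j = 1%R \/ u j = (-1)%R) /\
    (\sum_(j < size s) u j * Posz (nth 0%N s j))%R = z) <-> z \in signed_sums s.
Proof.
elim: s z => [|x s IH] z.
  rewrite inE; split => [[u [_ <-]]|/eqP->]; first by rewrite big_ord0.
  by exists (fun _ => 0%R); split; auto; rewrite big_ord0.
rewrite signed_sums_cons; split.
- case=> u [u_sign]; rewrite big_ord_recl /= => <-.
  have tail_in : (\sum_(i < size s) u i.+1 * Posz (nth 0%N s i))%R \in signed_sums s.
    by apply/IH; exists (fun j => u j.+1).
  apply/or3P; case: (u_sign 0) => [|[]] ->.
  + by apply: Or31; rewrite mul0r add0r.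
  + by apply: Or32; rewrite mul1r addrC addKr.
  + by apply: Or33; rewrite mulN1r addrC addNKr.
- have extend c z' : c = 0%R \/ c = 1%R \/ c = (-1)%R -> z' \in signed_sums s ->
      z = (c * x%:Z + z')%R ->
      exists u : nat -> int, (forall j, u j = 0%R \/ u j = 1%R \/ u j = (-1)%R) /\
        (\sum_(j < (size s).+1) u j * Posz (nth 0%N (x :: s) j))%R = z.
    move=> c_sign /IH [u [u_sign <-]] ->.
    exists (fun j => if j is j'.+1 then u j' else c); split; first by case.
    by rewrite big_ord_recl.
  case/or3P => z_in.
  + by apply: (extend 0%R z); auto; rewrite mul0r add0r.
  + by apply: (extend 1%R (z - x%:Z)%R); auto; rewrite mul1r addrC subrK.
  + by apply: (extend (-1)%R (z + x%:Z)%R); auto; rewrite mulN1r addrC addrK.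
Qed.

Lemma signed_sums_card s N :
  (forall l, l <= N -> Posz l \in signed_sums s) -> 2 * N + 1 <= 3 ^ size s.
Proof.
move=> cover; rewrite -size_signed_sums.
have -> : 2 * N + 1 = size [seq (Posz i - Posz N)%R | i <- iota 0 (2 * N + 1)].
  by rewrite size_map size_iota.
apply: uniq_leq_size => [|z /mapP [i]].
  by rewrite map_inj_uniq ?iota_uniq // => i j /addIr [].
rewrite mem_iota => i_lt ->; case: (leqP N i) => [N_le|i_lt_N].
  have -> : (Posz i - Posz N = Posz (i - N))%R by lia.
  by apply: cover; lia.
have -> : (Posz i - Posz N = - Posz (N - i))%R by lia.
by apply/signed_sumsN/cover; lia.
Qed.

Lemma weighing_card n w : weighing_partition n w -> 2 * n + 1 <= 3 ^ size w.
Proof.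
case=> _ [_ repr]; apply: signed_sums_card => -[_|l le_ln].
  exact: signed_sums0.
by apply/signed_sumsP/repr; lia.
Qed.

(* For a decreasing list this is the paper's condition w_(i+1) <= 2 R_i + 1. *)
Fixpoint covering (s : seq nat) : bool :=
  if s is x :: t then (x <= 2 * sumn t + 1) && covering t else true.

Lemma covering_signed_sums s z :
  covering s -> (`|z| <= (sumn s)%:Z)%R -> z \in signed_sums s.
Proof.
elim: s z => [|x s IH] z /=; first by rewrite inE; lia.
case/andP=> x_le cov_s z_le; rewrite signed_sums_cons; apply/or3P.
case: (boolP (`|z| <= (sumn s)%:Z)%R) => [|z_gt]; first by move/(IH _ cov_s); apply: Or31.
case: (boolP (0 <= z)%R) => z_sign.
  by apply/Or32/IH => //; lia.
by apply/Or33/IH => //; lia.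
Qed.

Lemma covering_card s : covering s -> 2 * sumn s + 1 <= 3 ^ size s.
Proof. by move=> cov; apply: signed_sums_card => l l_le; apply: covering_signed_sums; lia. Qed.

Lemma covering_weighing s :
  all (fun x => 0 < x) s -> covering s -> weighing_partition (sumn s) s.
Proof.
move=> pos cov; split=> //; split=> // l l_le.
by apply/signed_sumsP/covering_signed_sums => //; lia.
Qed.

Lemma sumn_filter_le (p : pred nat) s : sumn (filter p s) <= sumn s.
Proof. by rewrite -(perm_sumn (permEl (perm_filterC p s))) sumn_cat leq_addr. Qed.

Lemma leq_sumn_mem y s : y \in s -> y <= sumn s.
Proof. by move=> /perm_to_rem /perm_sumn /= ->; apply: leq_addr. Qed.

(* With A the total of the parts below t: a signed sum falling short of
   sumn s by less than t must give sign +1 to every part >= t. *)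
Lemma signed_sums_gap s t z : z \in signed_sums s ->
  (z <= (sumn s)%:Z - t%:Z \/
   (sumn s)%:Z - 2 * (sumn [seq v <- s | (v < t)%N])%:Z <= z)%R.
Proof.
elim: s z => [|x s IH] z; first by rewrite inE => /eqP ->; right.
move=> z_in; have := signed_sums_norm z_in; move: z_in.
rewrite signed_sums_cons => /or3P [] z_in; have := IH _ z_in;
  have := signed_sums_norm z_in; rewrite /=; case: (ltnP x t) => /=; lia.
Qed.

Lemma weighing_gap n w y : weighing_partition n w -> y \in w ->
  y <= 2 * sumn [seq v <- w | v < y] + 1.
Proof.
case=> _ [sum_w repr] /perm_to_rem w_perm.
have sumE : n = y + sumn (rem y w) by rewrite -sum_w (perm_sumn w_perm).
have filterE : sumn [seq v <- w | v < y] = sumn [seq v <- rem y w | v < y].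
  by rewrite (perm_sumn (perm_filter _ w_perm)) /= ltnn.
have A_le := sumn_filter_le (fun v => v < y) (rem y w).
rewrite filterE; set A := sumn _ in A_le *; rewrite leqNgt; apply/negP => y_big.
have /signed_sumsP/(signed_sums_gap y) : representable w (n - 2 * A - 1).
  by apply: repr; lia.
rewrite sum_w filterE -/A; lia.
Qed.

Lemma geq_sorted_cons x s : sorted geq (x :: s) = all (geq x) s && sorted geq s.
Proof. by apply: path_sortedE => a b c ab bc; apply: leq_trans bc ab. Qed.

Lemma sort_geq_sorted w : sorted geq (sort geq w).
Proof. by apply: sort_sorted => a b; apply: leq_total. Qed.

Lemma perm_sort_geq w : perm_eq (sort geq w) w.
Proof. exact/permEl/perm_sort. Qed.

Lemma sorted_covering s : sorted geq s ->
  {in s, forall y, y <= 2 * sumn [seq v <- s | v < y] + 1} -> covering s.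
Proof.
elim: s => // x s IH; rewrite geq_sorted_cons.
case/andP=> /allP s_le sorted_s gap; apply/andP; split.
  have := gap x (mem_head _ _); rewrite /= ltnn.
  by have := sumn_filter_le (fun v => v < x) s; lia.
apply: IH => // y y_in; have y_le : y <= x := s_le y y_in.
by have := gap y (mem_behead (s := x :: s) y_in); rewrite /= ltnNge y_le.
Qed.

Lemma weighing_sort_covering n w : weighing_partition n w -> covering (sort geq w).
Proof.
move=> weigh; apply: sorted_covering => [|y]; first exact: sort_geq_sorted.
rewrite mem_sort => /(weighing_gap weigh).
by rewrite (perm_sumn (perm_filter _ (perm_sort_geq w))).
Qed.

Lemma bigmax_head a s : {in s, forall y, y <= a} -> \max_(y <- a :: s) y = a.
Proof. by move=> s_le; rewrite big_cons; apply/maxn_idPl/bigmax_leqP_seq => y /s_le. Qed.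

Lemma R_last_sort n w : sumn w = n -> R_last n w = sumn (behead (sort geq w)).
Proof.
rewrite /R_last -(perm_big _ (perm_sort_geq w)) -(perm_sumn (perm_sort_geq w)).
case: (sort geq w) (sort_geq_sorted w) => [|x t]; first by move=> _ <-; rewrite big_nil.
by rewrite geq_sorted_cons => /andP [/allP t_le _] <-; rewrite bigmax_head //= addKn.
Qed.

Lemma R_last_bounds n w : weighing_partition n w ->
  n <= 3 * R_last n w + 1 /\ 2 * R_last n w + 1 <= 3 ^ (size w).-1.
Proof.
move=> weigh; have [_ [sum_w _]] := weigh.
have := weighing_sort_covering weigh; rewrite (R_last_sort sum_w).
rewrite -(perm_size (perm_sort_geq w)) -sum_w -(perm_sumn (perm_sort_geq w)).
case: (sort geq w) => [|x t] /=; first by rewrite expn0.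
by case/andP=> x_le /covering_card; lia.
Qed.

Lemma R_last_bound_two_largest n w i : weighing_partition n w -> size w = i.+2 ->
  4 * R_last n w + 1 <= 2 * n + 3 ^ i.
Proof.
move=> weigh; have [_ [sum_w _]] := weigh.
have := weighing_sort_covering weigh; rewrite (R_last_sort sum_w).
rewrite -(perm_size (perm_sort_geq w)) -sum_w -(perm_sumn (perm_sort_geq w)).
case: (sort geq w) (sort_geq_sorted w) => [|x [|y r]] //= /andP [y_le _].
by case/and3P=> _ _ /covering_card => + [<-]; lia.
Qed.

Lemma feasible_of_weighing n w :
  weighing_partition n w -> 3 ^ (size w).-1 < 2 * n + 1 -> feasible_partition n w.
Proof.
move=> weigh small; split=> // w' /weighing_card card'.
rewrite leqNgt; apply/negP => lt_size.
have : 3 ^ size w' <= 3 ^ (size w).-1 by rewrite leq_exp2l //; lia.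
lia.
Qed.

Lemma feasible_size n w w' :
  feasible_partition n w -> feasible_partition n w' -> size w = size w'.
Proof. by case=> [weigh min] [weigh' min']; apply/eqP; rewrite eqn_leq min' ?min. Qed.

Fixpoint ternary_weights k : seq nat :=
  if k is k'.+1 then 3 ^ k' :: ternary_weights k' else [::].

Lemma size_ternary_weights k : size (ternary_weights k) = k.
Proof. by elim: k => //= k ->. Qed.

Lemma ternary_weights_sum k : 2 * sumn (ternary_weights k) + 1 = 3 ^ k.
Proof. by elim: k => //= k IH; rewrite expnS -IH; lia. Qed.

Lemma ternary_weights_pos k : all (fun x => 0 < x) (ternary_weights k).
Proof. by elim: k => //= k ->; rewrite expn_gt0. Qed.

Lemma ternary_weights_covering k : covering (ternary_weights k).
Proof. by elim: k => //= k ->; rewrite -ternary_weights_sum andbT. Qed.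

Lemma R_last_attained n i T R :
  2 * T + 1 = 3 ^ i -> T < R <= 3 * T + 1 -> n <= 3 * R + 1 -> 2 * R <= n + T ->
  3 * T + 1 < n ->
  let w := (n - R) :: (R - T) :: ternary_weights i in
  feasible_partition n w /\ R_last n w = R.
Proof.
move=> T_odd /andP [T_lt R_le] n_le R2_le n_big w.
have T_sum : sumn (ternary_weights i) = T by have := ternary_weights_sum i; lia.
have sum_w : sumn w = n by rewrite /= T_sum; lia.
split.
  apply: feasible_of_weighing; last by rewrite /= size_ternary_weights expnS -T_odd; lia.
  rewrite -[X in weighing_partition X]sum_w; apply: covering_weighing.
    by rewrite /= ternary_weights_pos; apply/and3P; split; lia.
  by rewrite /= ternary_weights_covering T_sum; apply/and3P; split; lia.
rewrite /R_last bigmax_head; first lia.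
move=> y; rewrite inE => /predU1P [-> | /leq_sumn_mem]; rewrite ?T_sum; lia.
Qed.

Theorem theorem5 (m n : nat) :
  0 < m ->
  3 ^ (m - 1) + 1 <= 2 * n -> 2 * n <= 3 ^ m - 1 ->
  (6 * n <= 3 ^ m + 3 + 2 * 3 ^ (m - 1) ->
     (forall w, feasible_partition n w ->
        (n + 1) %/ 3 <= R_last n w <= (6 * n + 3 ^ (m - 1) - 3) %/ 12) /\
     (exists w, feasible_partition n w /\ R_last n w = (n + 1) %/ 3) /\
     (exists w, feasible_partition n w /\
        R_last n w = (6 * n + 3 ^ (m - 1) - 3) %/ 12)) /\
  (3 ^ m + 3 + 2 * 3 ^ (m - 1) + 6 <= 6 * n ->
     (forall w, feasible_partition n w ->
        (n + 1) %/ 3 <= R_last n w <= (3 ^ (m - 1) - 1) %/ 2) /\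
     (exists w, feasible_partition n w /\ R_last n w = (n + 1) %/ 3) /\
     (exists w, feasible_partition n w /\
        R_last n w = (3 ^ (m - 1) - 1) %/ 2)).
Proof.
case: m => // k _; rewrite subSS subn0 => lo hi.
case: k => [|i] in lo hi *.
  rewrite expn0 expn1 in lo hi *; have -> : n = 1 by lia.
  have F1 : feasible_partition 1 [:: 1].
    by apply: feasible_of_weighing => //; apply: (covering_weighing (s := [:: 1])).
  have R0 w : feasible_partition 1 w -> R_last 1 w = 0.
    by move=> Fw; have := R_last_bounds Fw.1; rewrite (feasible_size Fw F1) expn0; lia.
  have R1 : R_last 1 [:: 1] = 0 by apply: R0.
  by split=> [_ | //]; split; [move=> w /R0 -> | split; exists [:: 1]].
have [T T_odd] : exists T, 2 * T + 1 = 3 ^ i := ex_intro _ _ (ternary_weights_sum i).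
rewrite !expnS -T_odd in lo hi *.
have witness R := @R_last_attained n i T R T_odd.
have [F0 R0] := witness ((n + 1) %/ 3) ltac:(lia) ltac:(lia) ltac:(lia) ltac:(lia).
have bounds w : feasible_partition n w -> [/\ (n + 1) %/ 3 <= R_last n w,
    4 * R_last n w + 1 <= 2 * n + (2 * T + 1) & 2 * R_last n w + 1 <= 3 * (2 * T + 1)].
  move=> Fw; have size_w : size w = i.+2.
    by rewrite (feasible_size Fw F0) /= size_ternary_weights.
  have := R_last_bound_two_largest Fw.1 size_w; have := R_last_bounds Fw.1.
  by rewrite size_w /= expnS -T_odd => -[? ?] ?; split; lia.
split=> range; split; try by move=> w /bounds [? ? ?]; lia.
all: split; first by eexists; exact: (conj F0 R0).
- by eexists; apply: (witness ((6 * n + 3 * (2 * T + 1) - 3) %/ 12)); lia.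
- by eexists; apply: (witness ((3 * (2 * T + 1) - 1) %/ 2)); lia.
Qed.
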